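(* For $n\ge 1$, let $\mathcal M(n)$ be the number of MAB pairs and $\overline{\mathcal M}(n)$ the number of MAU pairs $(u,v)$ with $u,v\in\{a,b\}^n$. Then the number of pairs $(u,v)\in\{a,b\}^n\times\{a,b\}^n$ that have an external abelian-border but no internal abelian-border equals $\dfrac{2^{2n}-\mathcal M(n)-\overline{\mathcal M}(n)}{2}$, and so does the number of pairs that have an internal abelian-border but no external abelian-border.
   Context: Let $\Sigma=\{a,b\}$. For a word $w$ and a letter $c$, $|w|_c$ denotes the number of occurrences of $c$ in $w$. Two words $x,y$ are abelian equivalent, written $x\sim_{\mathrm{abl}}y$, if $|x|_c=|y|_c$ for all $c\in\Sigma$. For words $u,v$: a pair $(x,y)$ is an internal abelian-border of $(u,v)$ if $x$ is a nonempty proper suffix of $u$, $y$ is a proper prefix of $v$, and $x\sim_{\mathrm{abl}}y$; it is an external abelian-border of $(u,v)$ if $x$ is a nonempty proper prefix of $u$, $y$ is a proper suffix of $v$, and $x\sim_{\mathrm{abl}}y$. The pair $(u,v)$ is mutually abelian-bordered (MAB) if it has both an internal and an external abelian-border, and mutually abelian-unbordered (MAU) if it has neither. *)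

(* Alphabet Sigma = {a,b} is encoded as bool (a := true, b := false). *)
From mathcomp Require Import all_boot.
Set Implicit Arguments.
Unset Strict Implicit.
Unset Printing Implicit Defensive.

Definition word := seq bool.

Definition abl (x y : word) : bool := [forall c : bool, count_mem c x == count_mem c y].

Definition internal_border (u v x y : word) : bool :=
  [&& suffix x u, x != [::], x != u, prefix y v, y != v & abl x y].

Definition external_border (u v x y : word) : bool :=
  [&& prefix x u, x != [::], x != u, suffix y v, y != v & abl x y].

(* Existence of a border: every prefix of u is take i u and every suffix is
   drop (size u - i) u for some i <= size u, so quantifying over these
   finitely many candidates is the same as quantifying over all words. *)
Definition has_internal (u v : word) : bool :=
  [exists i : 'I_(size u).+1, exists j : 'I_(size v).+1,
     internal_border u v (drop (size u - i) u) (take j v)].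

Definition has_external (u v : word) : bool :=
  [exists i : 'I_(size u).+1, exists j : 'I_(size v).+1,
     external_border u v (take i u) (drop (size v - j) v)].

Definition MAB (u v : word) : bool := has_internal u v && has_external u v.
Definition MAU (u v : word) : bool := ~~ has_internal u v && ~~ has_external u v.

Definition pairs (n : nat) := (n.-tuple bool * n.-tuple bool)%type.

Definition M (n : nat) : nat := #|[set p : pairs n | MAB p.1 p.2]|.
Definition Mbar (n : nat) : nat := #|[set p : pairs n | MAU p.1 p.2]|.

Definition ext_only (n : nat) : nat :=
  #|[set p : pairs n | has_external p.1 p.2 && ~~ has_internal p.1 p.2]|.
Definition int_only (n : nat) : nat :=
  #|[set p : pairs n | has_internal p.1 p.2 && ~~ has_external p.1 p.2]|.

From mathcomp Require Import all_boot zify.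

(* The swap (u, v) |-> (v, u) exchanges internal and external abelian-borders,
   so it is a bijection between the pairs with only an external border and
   those with only an internal one.  Since the four classes MAB, MAU,
   external-only and internal-only partition all 2^(2n) pairs, each of the two
   middle classes has (2^(2n) - M(n) - Mbar(n)) / 2 elements. *)

Lemma ablC (x y : word) : abl x y = abl y x.
Proof. by apply/forallP/forallP => xy c; rewrite eq_sym; apply: xy. Qed.

Lemma abl_size (x y : word) : abl x y -> size x = size y.
Proof.
have sizeE (w : word) : size w = count_mem true w + count_mem false w.
  by rewrite -(count_predC (pred1 true)); congr (_ + _); apply: eq_count => -[].
by move/forallP=> xy; rewrite !sizeE (eqP (xy true)) (eqP (xy false)).
Qed.

Lemma internal_borderC (u v x y : word) :
  internal_border u v x y = external_border v u y x.
Proof.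
rewrite /internal_border /external_border ablC.
have [yx|] := boolP (abl y x); last by rewrite !andbF.
have -> : (x != [::]) = (y != [::]) by rewrite -!size_eq0 (abl_size _ _ yx).
by case: (suffix x u); case: (prefix y v); case: (x != u); case: (y != v);
   case: (y != [::]).
Qed.

Lemma has_internalC (u v : word) : has_internal u v = has_external v u.
Proof.
apply/existsP/existsP => [[i /existsP [j uv]] | [j /existsP [i vu]]].
  by exists j; apply/existsP; exists i; rewrite -internal_borderC.
by exists i; apply/existsP; exists j; rewrite internal_borderC.
Qed.

Lemma card_swap (T : finType) (r : rel T) :
  #|[set p : T * T | r p.2 p.1]| = #|[set p : T * T | r p.1 p.2]|.
Proof.
have swapK : involutive (fun p : T * T => (p.2, p.1)) by case.
rewrite -(card_preimset _ (inv_inj swapK)); apply: eq_card => p.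
by rewrite !inE.
Qed.

Lemma card_partition2 (T : finType) (A B : pred T) :
  #|[predI A & B]| + #|[predD A & B]| + #|[predI [predC A] & B]|
    + #|[predD [predC A] & B]| = #|T|.
Proof. by rewrite cardID -addnA cardID cardC. Qed.

Lemma card_pairs (n : nat) : #|{: pairs n}| = 2 ^ (2 * n).
Proof. by rewrite card_prod !card_tuple card_bool -expnD addnn mul2n. Qed.

Lemma int_only_ext_only (n : nat) : int_only n = ext_only n.
Proof.
pose r (u v : n.-tuple bool) := has_external u v && ~~ has_internal u v.
rewrite /ext_only -(card_swap _ r); apply: eq_card => p.
by rewrite !inE /r -!has_internalC.
Qed.

Theorem mainTheorem13 (n : nat) (hn : 1 <= n) :
  2 * ext_only n = 2 ^ (2 * n) - M n - Mbar n /\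
  2 * int_only n = 2 ^ (2 * n) - M n - Mbar n.
Proof.
pose hi (p : pairs n) := has_internal p.1 p.2.
pose he (p : pairs n) := has_external p.1 p.2.
have := card_partition2 _ hi he; rewrite card_pairs.
have -> : #|[predI hi & he]| = M n by apply: eq_card => p; rewrite inE.
have -> : #|[predD hi & he]| = int_only n.
  by apply: eq_card => p; rewrite !inE andbC.
have -> : #|[predI [predC hi] & he]| = ext_only n.
  by apply: eq_card => p; rewrite inE andbC.
have -> : #|[predD [predC hi] & he]| = Mbar n.
  by apply: eq_card => p; rewrite inE /= /MAU andbC.
rewrite int_only_ext_only; lia.
Qed.
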